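(* There is $p_0$ such that for every prime $p>p_0$ with $p\equiv 1\pmod 3$ and every set $A\subseteq\mathbb{Z}_p$ with $|A|=(2p+1)/3$, one has $\Lambda_3(A)>0.23$.
   Context: For $f:\mathbb{Z}_p\to\mathbb{C}$, $\Lambda_3(f)=\frac{1}{p^2}\sum_{n,d\in\mathbb{Z}_p} f(n)f(n+d)f(n+2d)$; a set is identified with its indicator function. *)

From mathcomp Require Import all_boot all_order all_algebra.
Set Implicit Arguments. Unset Strict Implicit. Unset Printing Implicit Defensive.
Import GRing.Theory Num.Theory.

(* Z_p is modelled as 'I_p (residues 0..p-1) with arithmetic mod p.
   A set A ⊆ Z_p is identified with its indicator function. *)

Definition inZp (p : nat) (A : {set 'I_p}) (x : nat) : bool :=
  [exists a in A, (a : nat) == x %% p].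

Definition ap3_count (p : nat) (A : {set 'I_p}) : nat :=
  #|[set nd : 'I_p * 'I_p |
      [&& inZp A nd.1, inZp A (nd.1 + nd.2) & inZp A (nd.1 + 2 * nd.2)]]|.

(* Lambda_3(1_A) = p^{-2} sum_{n,d} 1_A(n) 1_A(n+d) 1_A(n+2d) *)
Definition Lambda3 (p : nat) (A : {set 'I_p}) : rat :=
  (ap3_count A)%:R / (p ^ 2)%:R.

From Pilot Require Import Defs.
From mathcomp Require Import all_boot all_order all_algebra.
From mathcomp Require Import zify.
Import GRing.Theory Num.Theory.
Local Open Scope ring_scope.

(* Write p = 3k + 1 and B for the complement of A, so |B| = k.  By
   inclusion-exclusion over the three conditions n, n + d, n + 2d in B, the
   number of pairs (n, d) giving a 3-AP in A is p^2 - 3kp + 3k^2 - T, where T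
   counts those giving a 3-AP in B.
   Sending (n, n + d, n + 2d) to (n, n + 2d) embeds them into the pairs of B x B
   whose sum lies in 2B.  If e has r(e) := |B ∩ (B - e)| representations as a
   difference, then at least r(e) (2k - r(e) - |2B|) >= r(e) (k - r(e)) pairs
   of B x B have their sum outside 2B, so T <= k^2 - r(e) (k - r(e)).  Since
   r(0) = k and r averages k^2 / p < k / 3 while r changes by at most k - r(c)
   along the multiples of c, some e has k - 1 <= 3 r(e) <= 2k, whence
   9 r(e) (k - r(e)) >= 2k^2 - k - 1 and Lambda_3(A) >= 20/81 - O(1/p) > 0.23
   for every p. *)

Section DifferenceCount.

Context {G : finZmodType}.
Implicit Types (B S : {set G}) (c e : G).

Definition diff_count B e := #|[set x in B | x + e \in B]|.

Lemma diff_count_le B e : (diff_count B e <= #|B|)%N.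
Proof. by apply: subset_leq_card; apply/subsetP => x; rewrite inE => /andP[]. Qed.

Lemma diff_count0 B : diff_count B 0 = #|B|.
Proof. by apply: eq_card => x; rewrite inE addr0 andbb. Qed.

Lemma card_diff_countC B c :
  #|[set x in B | x + c \notin B]| = (#|B| - diff_count B c)%N.
Proof.
rewrite -(cardsID [set x | x + c \in B] B) /diff_count.
rewrite (_ : B :&: _ = [set x in B | x + c \in B]) ?addKn.
  by apply: eq_card => x; rewrite !inE andbC.
by apply/setP => x; rewrite !inE.
Qed.

Lemma diff_count_shift B c e :
  (diff_count B e <= diff_count B (e + c)%R + (#|B| - diff_count B c))%N.
Proof.
rewrite /diff_count -card_diff_countC.
set X := [set x in B | x + e \in B].
rewrite -(cardsID [set x | x + (e + c) \in B] X) leq_add //.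
  by apply: subset_leq_card; apply/subsetP => x; rewrite !inE => /andP[/andP[-> _]].
rewrite -(card_imset (X :\: _) (addIr e)); apply: subset_leq_card.
apply/subsetP => y /imsetP[x]; rewrite !inE => /andP[xP /andP[_ xeB]] ->.
by rewrite xeB -addrA.
Qed.

Lemma sum_diff_count B : (\sum_e diff_count B e = #|B| * #|B|)%N.
Proof.
under eq_bigr => e _ do rewrite /diff_count -sum1_card.
rewrite (exchange_big_dep (mem B)) /=; last by move=> e x _; rewrite inE => /andP[].
rewrite -sum_nat_const; apply: eq_bigr => x xB.
rewrite (eq_bigl (mem ((fun e => x + e) @^-1: B))); last by move=> e; rewrite !inE xB.
by rewrite sum1_card card_preimset //; apply: addrI.
Qed.

(* Since [diff_count B] drops by at most [#|B| - diff_count B c] from one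
   multiple of [c] to the next, it cannot jump over the middle third. *)
Lemma diff_count_middle_third B c j :
  (2 * #|B| < 3 * diff_count B c)%N ->
  (3 * diff_count B (c *+ j) <= 2 * #|B|)%N ->
  exists e, (#|B| - 1 <= 3 * diff_count B e <= 2 * #|B|)%N.
Proof.
move=> large_c; elim: j => [|j IHj] small_j.
  by exists 0; move: small_j; rewrite mulr0n diff_count0; lia.
have [|large_j] := leqP (3 * diff_count B (c *+ j)) (2 * #|B|); first exact: IHj.
exists (c *+ j.+1); rewrite small_j andbT.
have := diff_count_shift B c (c *+ j); have := diff_count_le B c.
rewrite -mulrSr; move: small_j; set d := diff_count B (c *+ j.+1); lia.
Qed.

Lemma exists_diff_count_small B :
  #|G| = (3 * #|B| + 1)%N -> exists e, (3 * diff_count B e <= 2 * #|B|)%N.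
Proof.
move=> cardG; apply/existsP; apply: contraT; rewrite negb_exists => /forallP large.
have : (\sum_(e : G) (2 * #|B|).+1 <= \sum_(e : G) 3 * diff_count B e)%N.
  by apply: leq_sum => e _; rewrite ltnNge large.
by rewrite -big_distrr /= sum_diff_count sum_nat_const cardG; set k := #|B|; nia.
Qed.

Lemma exists_diff_count_large B :
  #|G| = (3 * #|B| + 1)%N -> (1 < #|G|)%N ->
  exists2 c, c != 0 & (#|B| - 1 <= 3 * diff_count B c)%N.
Proof.
move=> cardG G_gt1.
have [c /andP[c_neq0 large]|small] :=
  pickP [pred c | (c != 0) && (#|B| - 1 <= 3 * diff_count B c)%N]; first by exists c.
exfalso; have : (\sum_(e : G | e != 0%R) (3 * diff_count B e + 1) <=
                 \sum_(e : G | e != 0%R) (#|B| - 1))%N.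
  by apply: leq_sum => e e_neq0; have := small e; rewrite /= e_neq0 /= => /negbT; lia.
rewrite big_split -big_distrr /= !sum_nat_const cardC1 cardG.
have := sum_diff_count B; rewrite (bigD1 0%R) //= diff_count0.
move: G_gt1; rewrite cardG; set k := #|B|; set s := (\sum_(i | _) _)%N; nia.
Qed.

Lemma card_sums_in_notin B S :
  (#|[set xz in setX B B | (xz.1 + xz.2)%R \in S]| +
   #|[set xz in setX B B | (xz.1 + xz.2)%R \notin S]| = #|B| * #|B|)%N.
Proof.
rewrite -cardsX -(cardsID [set xz : G * G | xz.1 + xz.2 \in S] (setX B B)).
by congr (_ + _)%N; apply: eq_card => xz; rewrite !inE // andbC.
Qed.

Lemma card_sums_notin_ge B S e :
  (diff_count B e * (2 * #|B| - diff_count B e - #|S|) <=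
     #|[set xz in setX B B | (xz.1 + xz.2)%R \notin S]|)%N.
Proof.
rewrite /diff_count; set B' := [set x in B | x + e \in B].
set W := B :|: [set x + e | x in B].
have cardW : (#|W| + #|B'| = 2 * #|B|)%N.
  have cardBe : #|[set x + e | x in B]| = #|B| by apply: card_imset; apply: addIr.
  have cardBIBe : #|B :&: [set x + e | x in B]| = #|B'|.
    rewrite -(card_imset B' (addIr e)); apply: eq_card => w.
    rewrite inE; apply/andP/imsetP => [[wB /imsetP[x xB wE]]|[x]].
      by exists x; rewrite // inE xB -wE.
    by rewrite inE => /andP[xB xeB] ->; split; last exact: imset_f.
  have := subset_leq_card (subsetIl B [set x + e | x in B]).
  by rewrite cardsU cardBe cardBIBe; lia.
(* A pair (b, w) with b + e in B and w in B \/ B + e yields a pair of B x B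
   with the same sum: (w, b) if w is in B, and (b + e, w - e) otherwise. *)
pose swap (bw : G * G) :=
  if bw.2 \in B then (bw.2, bw.1) else (bw.1 + e, bw.2 - e).
set D := [set bw : G * G | [&& bw.1 \in B', bw.2 \in W & bw.1 + bw.2 \notin S]].
have swap_inj : {in D &, injective swap}.
  move=> [b1 w1] [b2 w2]; rewrite !inE /swap /=.
  move=> /andP[/andP[_ b1e] _] /andP[/andP[_ b2e] _].
  case: ifP => w1B; case: ifP => w2B.
  - by case=> -> ->.
  - by case=> _ w21; move: b1e; rewrite w21 subrK w2B.
  - by case=> _ w12; move: b2e; rewrite -w12 subrK w1B.
  - by case=> /addIr-> /addIr->.
have swapD : swap @: D \subset [set xz in setX B B | xz.1 + xz.2 \notin S].
  apply/subsetP => xz /imsetP[[b w]]; rewrite !inE /=.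
  move=> /andP[/andP[bB be] /andP[wW wS]] ->; rewrite /swap /=.
  case: ifP => wB /=; first by rewrite wB bB addrC wS.
  move: wW; rewrite wB => /imsetP[x xB wE].
  by rewrite wE addrK xB be addrAC -addrA -wE wS.
have cardD : (#|B'| * (#|W| - #|S|) <= #|D|)%N.
  rewrite -[#|D|]sum1_card (eq_bigl (fun bw : G * G => (bw.1 \in B') &&
    ((bw.2 \in W) && (bw.1 + bw.2 \notin S)))); last by move=> bw; rewrite inE.
  rewrite -(pair_big_dep (fun b => b \in B') (fun b w => (w \in W) && (b + w \notin S))
                         (fun _ _ => 1%N)) /=.
  rewrite -sum_nat_const; apply: leq_sum => b _.
  rewrite (eq_bigl (mem (W :\: (fun w => b + w) @^-1: S))); last first.
    by move=> w; rewrite !inE andbC.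
  rewrite sum1_card leq_subLR -(card_preimset S (addrI b)).
  by rewrite -(cardsID ((fun w => b + w) @^-1: S) W) leq_add2r subset_leq_card ?subsetIr.
rewrite (_ : 2 * #|B| - _ = #|W|)%N; last lia.
by rewrite (leq_trans cardD) // -(card_in_imset swap_inj) subset_leq_card.
Qed.

End DifferenceCount.

Lemma Zp_unit_neq0 q (c : 'I_q.+2) : prime q.+2 -> c != 0 -> c \is a GRing.unit.
Proof.
move=> q2_prime c_neq0; have := @unitZpE q.+2 c isT; rewrite natr_Zp => ->.
rewrite prime_coprime // gtnNdvd // lt0n.
by apply: contra c_neq0 => /eqP c0; apply/eqP/val_inj.
Qed.

Lemma Zp_mulrn_surj {q} (c e : 'I_q.+2) :
  prime q.+2 -> c != 0 -> exists j, e = c *+ j.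
Proof.
move=> q2_prime c_neq0; exists (val (e / c)).
by rewrite -mulr_natr natr_Zp mulrC divrK // Zp_unit_neq0.
Qed.

Lemma exists_diff_count_middle_third {q} (B : {set 'I_q.+2}) :
  prime q.+2 -> q.+2 = (3 * #|B| + 1)%N ->
  exists e, (#|B| - 1 <= 3 * diff_count B e <= 2 * #|B|)%N.
Proof.
move=> q2_prime q2_eq; have cardG : #|'I_q.+2| = (3 * #|B| + 1)%N by rewrite card_ord.
have [c /andP[c_neq0 large_c]|not_large] :=
  pickP [pred c | (c != 0) && (2 * #|B| < 3 * diff_count B c)%N].
  have [e0 small_e0] := exists_diff_count_small B cardG.
  have [j e0E] := Zp_mulrn_surj c e0 q2_prime c_neq0.
  by move: small_e0; rewrite e0E; apply: diff_count_middle_third.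
have [|c c_neq0 large_c] := exists_diff_count_large B cardG.
  by rewrite card_ord.
by exists c; have := not_large c; rewrite /= c_neq0 /= => /negbT; rewrite -leqNgt large_c.
Qed.

Lemma cardsU3 {T : finType} (X Y Z : {set T}) :
  (#|X :|: Y :|: Z| + #|X :&: Y| + #|X :&: Z| + #|Y :&: Z| =
   #|X| + #|Y| + #|Z| + #|X :&: Y :&: Z|)%N.
Proof.
have := cardsUI X Y; have := cardsUI (X :|: Y) Z; have := cardsUI (X :&: Z) (Y :&: Z).
rewrite setIUl (_ : X :&: Z :&: (Y :&: Z) = X :&: Y :&: Z); first lia.
by apply/setP => x; rewrite !inE; do 3 case: (_ \in _).
Qed.

Section ArithmeticProgressions.

Context {G : finZmodType}.
Hypothesis double_inj : injective (fun x : G => x *+ 2).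

Definition ap3_set (A : {set G}) :=
  [set nd : G * G | [&& nd.1 \in A, nd.1 + nd.2 \in A & nd.1 + nd.2 + nd.2 \in A]].

Lemma card_ap3_setC (B : {set G}) :
  (#|ap3_set (~: B)| + 3 * (#|B| * #|G|) + #|ap3_set B| =
   #|G| * #|G| + 3 * (#|B| * #|B|))%N.
Proof.
pose E i := [set nd : G * G | nd.1 + nd.2 *+ i \in B].
have ap3_setCE : ap3_set (~: B) = ~: (E 0 :|: E 1 :|: E 2)%N.
  by apply/setP => -[n d]; rewrite !inE /= mulr2n addrA addr0; do 3 case: (_ \in B).
have ap3_setE : ap3_set B = (E 0 :&: E 1 :&: E 2)%N.
  by apply/setP => -[n d]; rewrite !inE /= mulr2n addrA addr0 andbA.
have cardE i : #|E i| = (#|B| * #|G|)%N.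
  have shear_inj : injective (fun nd : G * G => (nd.1 + nd.2 *+ i, nd.2)).
    by move=> [n d] [n' d'] [/[swap] /= <- /addIr ->].
  rewrite -cardsT -cardsX -(card_preimset (setX B setT) shear_inj).
  by apply: eq_card => -[n d]; rewrite !inE andbT.
have mulrn_inj m : (0 < m <= 2)%N -> injective (fun d : G => d *+ m).
  by case: m => [|[|[|m]]] // _ d d' /=; rewrite !mulr1n.
have cardEI i j : (i < j <= i + 2)%N -> #|E i :&: E j| = (#|B| * #|B|)%N.
  move=> /andP[lt_ij le_j].
  have pair_inj : injective (fun nd : G * G => (nd.1 + nd.2 *+ i, nd.1 + nd.2 *+ j)).
    move=> [n d] [n' d'] [/= eq_i].
    rewrite -(subnKC (ltnW lt_ij)) !mulrnDr !addrA eq_i.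
    have ji_range : (0 < j - i <= 2)%N by rewrite subn_gt0 lt_ij leq_subLR.
    move=> /addrI /(mulrn_inj _ ji_range) eq_d.
    by move: eq_i; rewrite eq_d => /addIr ->.
  rewrite -cardsX -(card_preimset (setX B B) pair_inj).
  by apply: eq_card => -[n d]; rewrite !inE.
have := cardsU3 (E 0%N) (E 1%N) (E 2%N); have := cardsC (E 0 :|: E 1 :|: E 2)%N.
have cardGG : #|{: G * G}| = (#|G| * #|G|)%N by exact: card_prod.
rewrite -ap3_setE -ap3_setCE cardGG !cardE !cardEI //; lia.
Qed.

Lemma card_ap3_set_le (B : {set G}) :
  (#|ap3_set B| <=
     #|[set xz in setX B B | (xz.1 + xz.2)%R \in [set y *+ 2 | y in B]]|)%N.
Proof.
have outer_inj : injective (fun nd : G * G => (nd.1, nd.1 + nd.2 *+ 2)).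
  by move=> [n d] [n' d'] /= [<- /addrI /double_inj ->].
rewrite -(card_imset _ outer_inj); apply: subset_leq_card.
apply/subsetP => xz /imsetP[[n d]]; rewrite !inE /= mulr2n addrA.
move=> /and3P[nB ndB nddB] ->; rewrite /= nB nddB.
apply/imsetP; exists (n + d) => //.
by rewrite mulr2n -!addrA; congr (_ + _); rewrite addrCA.
Qed.

Lemma card_ap3_setC_ge (B : {set G}) e :
  (#|G| * #|G| + 2 * (#|B| * #|B|) + diff_count B e * (#|B| - diff_count B e) <=
     #|ap3_set (~: B)| + 3 * (#|B| * #|G|))%N.
Proof.
pose S : {set G} := [set y *+ 2 | y in B].
have le_T :
    (#|ap3_set B| + diff_count B e * (#|B| - diff_count B e) <= #|B| * #|B|)%N.
  rewrite -(card_sums_in_notin B S) leq_add ?card_ap3_set_le //.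
  apply: leq_trans (card_sums_notin_ge B S e); rewrite leq_mul2l; apply/orP; right.
  have := diff_count_le B e; have : (#|S| <= #|B|)%N := leq_imset_card _ _; lia.
have := card_ap3_setC B; lia.
Qed.

End ArithmeticProgressions.

Lemma ap3_countE q (A : {set 'I_q.+2}) : ap3_count A = #|ap3_set A|.
Proof.
have inZpE (z : 'I_q.+2) x : val z = (x %% q.+2)%N -> Defs.inZp A x = (z \in A).
  move=> zE; apply/existsP/idP => [[a /andP[aA /eqP aE]]|zA].
      by rewrite (_ : z = a) //; apply: val_inj; rewrite /= zE aE.
  by exists z; rewrite zA zE eqxx.
apply: eq_card => -[n d]; rewrite !inE /=.
rewrite (inZpE n) ?modn_small // (inZpE (n + d)) // (inZpE (n + d + d)) //.
by rewrite /= modnDml -addnA addnn -mul2n.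
Qed.

Lemma Zp_double_inj {q} :
  prime q.+2 -> (2 < q.+2)%N -> injective (fun x : 'I_q.+2 => x *+ 2).
Proof.
move=> q2_prime q2_gt2 x y /= eq_xy.
have two_unit : (2%:R : 'I_q.+2) \is a GRing.unit.
  by have := @unitZpE q.+2 2 isT; rewrite prime_coprime // gtnNdvd.
by apply: (mulrI two_unit); rewrite !mulr_natl.
Qed.

Lemma middle_third_mul_subn_ge {k u : nat} :
  (k - 1 <= 3 * u <= 2 * k)%N -> (2 * k * k <= 9 * (u * (k - u)) + k + 1)%N.
Proof. by move=> /andP[]; nia. Qed.

Theorem mainTheorem11 :
  exists p0 : nat, forall p : nat,
    prime p -> (p0 < p)%N -> (p %% 3 = 1)%N ->
    forall A : {set 'I_p}, #|A| = ((2 * p + 1) %/ 3)%N ->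
      (23%:R / 100%:R : rat) < Lambda3 A.
Proof.
exists 0%N => p p_prime.
have [q p_eq] : exists q, p = q.+2 by exists p.-2; case: p p_prime => [|[|]].
subst p => _ p_mod3 A cardA.
have q2_eq : q.+2 = (3 * #|~: A| + 1)%N.
  by move: (cardsC A) p_mod3; rewrite card_ord cardA; lia.
set B := ~: A in q2_eq *.
have [e e_range] := exists_diff_count_middle_third B p_prime q2_eq.
have q2_gt2 : (2 < q.+2)%N by lia.
have := card_ap3_setC_ge (Zp_double_inj p_prime q2_gt2) B e; rewrite setCK card_ord.
have := middle_third_mul_subn_ge e_range.
have p2_gt0 : (0 : rat) < (q.+2 ^ 2)%:R by rewrite ltr0n expn_gt0.
rewrite /Lambda3 ap3_countE (ltr_pdivlMr _ _ p2_gt0) mulrAC.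
rewrite (ltr_pdivrMr _ _ (ltr0n _ 100)) -!natrM ltr_nat.
by move: q2_eq; set k := #|B|; set u := diff_count B e; nia.
Qed.
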